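(* In the setting of the context, Axiom (P2) holds for the projection distances $\{d_a\mid a\in C\}$ with any $\theta\ge4\delta$: for pairwise distinct $a,b,c\in C$, if $d_a(b,c)>\theta$ then $d_b(a,c)\le\theta$.
   Context: $X$ is a $\delta$-hyperbolic geodesic metric space ($\delta>0$, every geodesic triangle $\delta$-thin). $G$ acts on $X$ by isometries and $\mathcal{C}=(C,\{G_c\})$ is a $\rho$-separated fairly rotating family with $\rho\ge20\delta$ (i.e. $C\subseteq X$ is $G$-invariant, $G_c$ fixes $c$, $G_{gc}=gG_cg^{-1}$, distinct points of $C$ are at distance $\ge\rho$, and for $c\in C$, $g\in G_c\setminus\{1\}$, $x\in C\setminus\{c\}$ some geodesic from $x$ to $gx$ meets the closed $1$-ball about $c$). Fix $2+2\delta\le R\le\frac\rho2-3\delta$; $B_r(p)$ denotes the open ball. For $p\in C$, $S_p=\{x:d(x,p)=R\}$ with metric $d_{S_p}(x,y)=$ infimum of lengths of paths from $x$ to $y$ in $X\setminus B_R(p)$ (possibly $\infty$). For $x\in C\setminus\{p\}$, $\pi_p(x)\subseteq S_p$ is the set of points where geodesics $[p,x]$ meet $S_p$, and $d_p(x,y)=\operatorname{diam}_{S_p}(\pi_p(x)\cup\pi_p(y))$. *)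

From Stdlib Require Import Reals Lra.
From Coquelicot Require Import Coquelicot.
Open Scope R_scope.

Section Defs.
Variable X : Type.
Variable d : X -> X -> R.

Record IsMetric : Prop := {
  met_nonneg : forall x y, 0 <= d x y;
  met_sep : forall x y, d x y = 0 <-> x = y;
  met_sym : forall x y, d x y = d y x;
  met_tri : forall x y z, d x z <= d x y + d y z }.

Definition geodesic (gam : R -> X) (x y : X) : Prop :=
  gam 0 = x /\ gam (d x y) = y /\
  forall s t, 0 <= s <= d x y -> 0 <= t <= d x y -> d (gam s) (gam t) = Rabs (s - t).

Definition on_geodesic (gam : R -> X) (x y : X) (z : X) : Prop :=
  exists t, 0 <= t <= d x y /\ gam t = z.

Definition geodesic_space : Prop :=
  forall x y, exists gam, geodesic gam x y.

Definition triangles_thin (delta : R) : Prop :=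
  forall x y z g1 g2 g3, geodesic g1 x y -> geodesic g2 y z -> geodesic g3 x z ->
  forall p, on_geodesic g1 x y p ->
  exists q, (on_geodesic g2 y z q \/ on_geodesic g3 x z q) /\ d p q <= delta.

Definition hyperbolic_geodesic_space (delta : R) : Prop :=
  IsMetric /\ geodesic_space /\ triangles_thin delta.

Fixpoint partition_sum (gam : R -> X) (t : nat -> R) (n : nat) : R :=
  match n with
  | O => 0
  | S m => partition_sum gam t m + d (gam (t m)) (gam (t (S m)))
  end.

Definition is_partition (t : nat -> R) (n : nat) : Prop :=
  t O = 0 /\ t n = 1 /\ forall i, (i < n)%nat -> t i <= t (S i).

Definition path_length (gam : R -> X) : Rbar :=
  Rbar_lub (fun l => exists t n, is_partition t n /\ l = Finite (partition_sum gam t n)).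

Definition continuous_on01 (gam : R -> X) : Prop :=
  forall s, 0 <= s <= 1 -> forall eps, 0 < eps -> exists eta, 0 < eta /\
    forall t, 0 <= t <= 1 -> Rabs (t - s) < eta -> d (gam s) (gam t) < eps.

Definition path_outside (p : X) (r : R) (gam : R -> X) (u v : X) : Prop :=
  continuous_on01 gam /\ gam 0 = u /\ gam 1 = v /\
  forall t, 0 <= t <= 1 -> r <= d p (gam t).

Definition sphere (p : X) (r : R) (x : X) : Prop := d x p = r.

(* d_{S_p}(u,v): infimum of lengths of paths in X \ B_r(p) (+oo if none) *)
Definition dS (p : X) (r : R) (u v : X) : Rbar :=
  Rbar_glb (fun l => exists gam, path_outside p r gam u v /\ l = path_length gam).

Definition proj (p : X) (r : R) (x : X) (u : X) : Prop :=
  exists gam, geodesic gam p x /\ on_geodesic gam p x u /\ sphere p r u.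

(* d_p(x,y) = diam_{S_p}(pi_p(x) \cup pi_p(y)) *)
Definition dproj (p : X) (r : R) (x y : X) : Rbar :=
  Rbar_lub (fun l => exists u v,
    (proj p r x u \/ proj p r y u) /\ (proj p r x v \/ proj p r y v) /\
    l = dS p r u v).

End Defs.

Section Group.
Variables (G : Type) (mul : G -> G -> G) (one : G) (inv : G -> G).

Record IsGroup : Prop := {
  grp_assoc : forall a b c, mul a (mul b c) = mul (mul a b) c;
  grp_1l : forall a, mul one a = a;
  grp_1r : forall a, mul a one = a;
  grp_Vl : forall a, mul (inv a) a = one;
  grp_Vr : forall a, mul a (inv a) = one }.

Variables (X : Type) (d : X -> X -> R) (act : G -> X -> X).

Record IsIsometricAction : Prop := {
  act_1 : forall x, act one x = x;
  act_mul : forall g h x, act (mul g h) x = act g (act h x);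
  act_isom : forall g x y, d (act g x) (act g y) = d x y }.

Record FairlyRotatingFamily (C : X -> Prop) (Gc : X -> G -> Prop) (rho : R) : Prop := {
  frf_inv : forall g x, C x -> C (act g x);
  frf_sub1 : forall c, C c -> Gc c one;
  frf_subM : forall c g h, C c -> Gc c g -> Gc c h -> Gc c (mul g h);
  frf_subV : forall c g, C c -> Gc c g -> Gc c (inv g);
  frf_fix : forall c g, C c -> Gc c g -> act g c = c;
  frf_conj : forall c g h, C c ->
      (Gc (act g c) h <-> exists k, Gc c k /\ h = mul g (mul k (inv g)));
  frf_sep : forall c c', C c -> C c' -> c <> c' -> rho <= d c c';
  frf_rot : forall c g x, C c -> Gc c g -> g <> one -> C x -> x <> c ->
      exists gam, geodesic X d gam x (act g x) /\
        exists z, on_geodesic X d gam x (act g x) z /\ d z c <= 1 }.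
End Group.

From Stdlib Require Import Reals Lra Lia Classical.
From Coquelicot Require Import Coquelicot.
Open Scope R_scope.

(* Only the geometry of X and the rho-separation of C matter.  The key fact
   (dproj_small_or_center_near) says: if p is far (> r + 2 delta) from x and y,
   then either d_p(x, y) <= 4 delta, or some point q metrically between x and y
   is within r + 2 delta of p.  Indeed, for projections u, v of x, y to S_p,
   thinness of the triangle (p, x, y) at the point of [p, x] at distance
   r + delta from p either puts a point of [x, y] close to p, or yields a short
   detour u -> [p, x] -> [p, y] -> v outside B_r(p) of length <= 4 delta
   (sphere_detour), which bounds d_{S_p}(u, v).
   If d_a(b, c) > theta >= 4 delta, a is near a point z between b and c; if also
   d_b(a, c) > theta, b is near a point w between a and c.  An elementary
   estimate (centers_far_apart) then gives d(a, b) <= 2r + 4 delta < rho,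
   contradicting separation. *)

Lemma Rbar_lub_le (E : Rbar -> Prop) (l : Rbar) :
  (forall x, E x -> Rbar_le x l) -> Rbar_le (Rbar_lub E) l.
Proof.
  unfold Rbar_lub. destruct (Rbar_ex_lub E) as [m Hm]; simpl.
  intros Hub; apply (proj2 Hm); exact Hub.
Qed.

Lemma Rbar_glb_le (E : Rbar -> Prop) (x : Rbar) : E x -> Rbar_le (Rbar_glb E) x.
Proof.
  unfold Rbar_glb. destruct (Rbar_ex_glb E) as [m Hm]; simpl.
  intros Hx; apply (proj1 Hm); exact Hx.
Qed.

Lemma partition_mono (t : nat -> R) (n : nat) :
  is_partition t n -> forall j i, (i <= j <= n)%nat -> t i <= t j.
Proof.
  intros [_ [_ Hstep]]. induction j as [|j IH]; intros i Hij.
  - replace i with 0%nat by lia. lra.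
  - destruct (Nat.eq_dec i (S j)) as [-> | Hne]; [lra |].
    pose proof (IH i ltac:(lia)). pose proof (Hstep j ltac:(lia)). lra.
Qed.

Section MetricSpace.
Variables (X : Type) (d : X -> X -> R).
Hypothesis M : IsMetric X d.

Local Notation geod := (geodesic X d).

Definition lipschitz1 (f : R -> X) (a b : R) : Prop :=
  forall s t, a <= s <= b -> a <= t <= b -> d (f s) (f t) <= Rabs (s - t).

Definition between (x z y : X) : Prop := d x z + d z y = d x y.

Lemma lipschitz1_glue (f : R -> X) (a m b : R) : a <= m <= b ->
  lipschitz1 f a m -> lipschitz1 f m b -> lipschitz1 f a b.
Proof.
  intros Hm Hl Hr s t Hs Ht.
  pose proof (met_tri X d M (f s) (f m) (f t)) as Htri.
  destruct (Rle_dec s m); destruct (Rle_dec t m).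
  - apply Hl; lra.
  - pose proof (Hl s m ltac:(lra) ltac:(lra)) as Hsm.
    pose proof (Hr m t ltac:(lra) ltac:(lra)) as Hmt.
    revert Htri Hsm Hmt. unfold Rabs; repeat destruct Rcase_abs; intros; lra.
  - pose proof (Hr s m ltac:(lra) ltac:(lra)) as Hsm.
    pose proof (Hl m t ltac:(lra) ltac:(lra)) as Hmt.
    revert Htri Hsm Hmt. unfold Rabs; repeat destruct Rcase_abs; intros; lra.
  - apply Hr; lra.
Qed.

Lemma lipschitz1_ext (f g : R -> X) (a b : R) :
  (forall s, a <= s <= b -> f s = g s) -> lipschitz1 g a b -> lipschitz1 f a b.
Proof. intros E Hg s t Hs Ht. rewrite (E s Hs), (E t Ht). apply Hg; auto. Qed.

Lemma geodesic_shift_lipschitz (g : R -> X) (x y : X) (a b c : R) :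
  geod g x y -> 0 <= a + c -> b + c <= d x y -> lipschitz1 (fun s => g (s + c)) a b.
Proof.
  intros [_ [_ Hiso]] Ha Hb s t Hs Ht. rewrite Hiso by lra.
  right. f_equal. ring.
Qed.

Lemma geodesic_reverse_lipschitz (g : R -> X) (x y : X) (a b c : R) :
  geod g x y -> 0 <= c - b -> c - a <= d x y -> lipschitz1 (fun s => g (c - s)) a b.
Proof.
  intros [_ [_ Hiso]] Ha Hb s t Hs Ht. rewrite Hiso by lra.
  rewrite Rabs_minus_sym. right. f_equal. ring.
Qed.

Lemma geodesic_dist_start (g : R -> X) (x y : X) (s : R) :
  geod g x y -> 0 <= s <= d x y -> d x (g s) = s.
Proof.
  intros [H0 [_ Hiso]] Hs. rewrite <- H0 at 1. rewrite Hiso by lra.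
  rewrite Rabs_left1 by lra. lra.
Qed.

Lemma geodesic_dist_end (g : R -> X) (x y : X) (s : R) :
  geod g x y -> 0 <= s <= d x y -> d (g s) y = d x y - s.
Proof.
  intros [_ [H1 Hiso]] Hs. rewrite <- H1 at 1. rewrite Hiso by lra.
  rewrite Rabs_left1 by lra. lra.
Qed.

Lemma geodesic_between (g : R -> X) (x y : X) (s : R) :
  geod g x y -> 0 <= s <= d x y -> between x (g s) y.
Proof.
  intros Hg Hs. unfold between.
  rewrite (geodesic_dist_start g x y s), (geodesic_dist_end g x y s) by auto. ring.
Qed.

Lemma between_sym (x z y : X) : between x z y -> between y z x.
Proof.
  unfold between. rewrite (met_sym X d M y z), (met_sym X d M z x), (met_sym X d M y x).
  lra.
Qed.

Lemma between_same (x z : X) : between x z x -> z = x.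
Proof.
  unfold between. intros H. apply (met_sep X d M).
  pose proof (met_nonneg X d M x z). pose proof (met_nonneg X d M z x).
  rewrite (proj2 (met_sep X d M x x) eq_refl) in H. lra.
Qed.

Lemma proj_param (p e u : X) (r : R) : proj X d p r e u ->
  exists g, geod g p e /\ 0 <= r <= d p e /\ g r = u.
Proof.
  intros [g [Hg [[t [Ht Hu]] Hsph]]]. unfold sphere in Hsph.
  assert (Hpu : d p u = t) by (rewrite <- Hu; apply (geodesic_dist_start g p e); auto).
  rewrite (met_sym X d M), Hpu in Hsph. subst r.
  exists g. split; [exact Hg | split; [lra | exact Hu]].
Qed.

Lemma partition_sum_le (gam : R -> X) (L : R) (t : nat -> R) (n : nat) :
  is_partition t n ->
  (forall s s', 0 <= s <= 1 -> 0 <= s' <= 1 -> d (gam s) (gam s') <= L * Rabs (s - s')) ->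
  partition_sum X d gam t n <= L.
Proof.
  intros Hp Hlip. pose proof (partition_mono t n Hp) as Hmono.
  destruct Hp as [H0 [H1 Hstep]].
  assert (Hk : forall k, (k <= n)%nat -> partition_sum X d gam t k <= L * t k).
  { induction k as [|k IH]; intros Hk; simpl.
    - rewrite H0. lra.
    - pose proof (IH ltac:(lia)) as Hprev.
      assert (Hlo : 0 <= t k) by (rewrite <- H0; apply Hmono; lia).
      assert (Hhi : t (S k) <= 1) by (rewrite <- H1; apply Hmono; lia).
      pose proof (Hstep k ltac:(lia)) as Hincr.
      pose proof (Hlip (t k) (t (S k)) ltac:(lra) ltac:(lra)) as Hd.
      rewrite Rabs_left1 in Hd by lra. nra. }
  pose proof (Hk n (le_n n)) as Hn. rewrite H1 in Hn. lra.
Qed.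

Lemma dS_le_lipschitz_path (p u v : X) (r L : R) (f : R -> X) :
  0 <= L -> f 0 = u -> f L = v -> lipschitz1 f 0 L ->
  (forall s, 0 <= s <= L -> r <= d p (f s)) ->
  Rbar_le (dS X d p r u v) (Finite L).
Proof.
  intros HL Hu Hv Hlip Hout.
  set (gam := fun t => f (L * t)).
  assert (Hg : forall s t, 0 <= s <= 1 -> 0 <= t <= 1 ->
            d (gam s) (gam t) <= L * Rabs (s - t)).
  { intros s t Hs Ht. unfold gam.
    eapply Rle_trans; [apply Hlip; nra |].
    rewrite <- Rmult_minus_distr_l, Rabs_mult, (Rabs_pos_eq L) by lra. lra. }
  assert (Hpath : path_outside X d p r gam u v).
  { split; [| split; [| split]].
    - intros s Hs eps Heps. exists (eps / (L + 1)).
      assert (Heta : 0 < eps / (L + 1)) by (apply Rdiv_lt_0_compat; lra).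
      assert (Hsmall : L * (eps / (L + 1)) < eps).
      { unfold Rdiv. rewrite <- Rmult_assoc, (Rmult_comm L eps), Rmult_assoc.
        assert (L * / (L + 1) < 1).
        { apply (Rmult_lt_reg_r (L + 1)); [lra |].
          rewrite Rmult_assoc, Rinv_l by lra. lra. }
        nra. }
      split; [exact Heta |]. intros t Ht Hst.
      rewrite Rabs_minus_sym in Hst.
      pose proof (Hg s t Hs Ht). pose proof (Rabs_pos (s - t)). nra.
    - unfold gam. rewrite Rmult_0_r. exact Hu.
    - unfold gam. rewrite Rmult_1_r. exact Hv.
    - intros t Ht. unfold gam. apply Hout. nra. }
  apply Rbar_le_trans with (path_length X d gam).
  - apply Rbar_glb_le. exists gam. split; auto.
  - apply Rbar_lub_le. intros l [t [n [Hp ->]]]. simpl.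
    exact (partition_sum_le gam L t n Hp Hg).
Qed.

(* Detour outside the ball: if the points at parameters t1, t2 >= r of
   geodesics [p, e1], [p, e2] are at distance m <= t1 - r, then the path from
   g1 r up [p, e1] to g1 t1, across a geodesic to g2 t2, and down [p, e2] to
   g2 r stays outside B_r(p), so d_{S_p}(g1 r, g2 r) <= (t1 - r) + m + (t2 - r). *)
Lemma sphere_detour (p e1 e2 : X) (g1 g2 : R -> X) (r t1 t2 : R) :
  geodesic_space X d -> geod g1 p e1 -> geod g2 p e2 ->
  0 <= r -> r <= t1 <= d p e1 -> r <= t2 <= d p e2 -> d (g1 t1) (g2 t2) <= t1 - r ->
  Rbar_le (dS X d p r (g1 r) (g2 r))
          (Finite ((t1 - r) + d (g1 t1) (g2 t2) + (t2 - r))).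
Proof.
  intros Hgs G1 G2 Hr Ht1 Ht2 Hm.
  set (x := g1 t1). set (y := g2 t2). fold x y in Hm |- *.
  pose proof (met_nonneg X d M x y) as Hm0.
  destruct (Hgs x y) as [g G]. pose proof G as [Gx [Gy _]].
  set (a := t1 - r). remember (d x y) as m eqn:Hm_def.
  set (L := a + m + (t2 - r)).
  set (f := fun s => if Rle_dec s a then g1 (s + r)
                     else if Rle_dec s (a + m) then g (s - a)
                     else g2 (t2 + a + m - s)).
  assert (E1 : forall s, 0 <= s <= a -> f s = g1 (s + r)).
  { intros s Hs. unfold f. destruct (Rle_dec s a); auto; lra. }
  assert (E2 : forall s, a <= s <= a + m -> f s = g (s - a)).
  { intros s Hs. unfold f. destruct (Rle_dec s a).
    - replace s with a by lra. rewrite Rminus_diag, Gx. unfold x, a. f_equal. ring.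
    - destruct (Rle_dec s (a + m)); auto; lra. }
  assert (E3 : forall s, a + m <= s <= L -> f s = g2 (t2 + a + m - s)).
  { intros s Hs. unfold f. destruct (Rle_dec s a).
    - assert (Hxy : x = y) by (apply (met_sep X d M); lra).
      replace s with a by lra. replace (t2 + a + m - a) with t2 by lra.
      unfold x, y, a in Hxy |- *. rewrite <- Hxy. f_equal. ring.
    - destruct (Rle_dec s (a + m)); auto.
      replace s with (a + m) by lra. replace (t2 + a + m - (a + m)) with t2 by ring.
      replace (a + m - a) with m by ring. exact Gy. }
  replace (a + m + (t2 - r)) with L by reflexivity.
  apply (dS_le_lipschitz_path p _ _ r L f).
  - unfold L, a; lra.
  - rewrite E1 by (unfold a; lra). f_equal. ring.
  - rewrite E3 by (unfold L, a; lra). f_equal. unfold L. ring.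
  - apply (lipschitz1_glue f 0 (a + m) L); [unfold L, a; lra | |].
    + apply (lipschitz1_glue f 0 a (a + m)); [unfold a; lra | |].
      * apply lipschitz1_ext with (fun s => g1 (s + r)); [exact E1 |].
        apply (geodesic_shift_lipschitz g1 p e1 _ _ _ G1); unfold a; lra.
      * apply lipschitz1_ext with (fun s => g (s + - a));
          [intros; rewrite E2 by lra; reflexivity |].
        apply (geodesic_shift_lipschitz g x y _ _ _ G); lra.
    + apply lipschitz1_ext with (fun s => g2 (t2 + a + m - s)); [exact E3 |].
      apply (geodesic_reverse_lipschitz g2 p e2 _ _ _ G2); unfold L; lra.
  - intros s Hs. destruct (Rle_dec s a).
    + rewrite E1 by lra. rewrite (geodesic_dist_start g1 p e1) by (auto; unfold a in *; lra).
      lra.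
    + destruct (Rle_dec s (a + m)).
      * (* the middle geodesic stays within m <= a of x, and d p x = r + a *)
        rewrite E2 by lra.
        pose proof (met_tri X d M p (g (s - a)) x) as Htri.
        rewrite (met_sym X d M (g (s - a)) x),
                (geodesic_dist_start g x y) in Htri by (auto; lra).
        assert (d p x = t1) by (apply (geodesic_dist_start g1 p e1); auto; lra).
        unfold a in *; lra.
      * rewrite E3 by lra.
        rewrite (geodesic_dist_start g2 p e2) by (auto; unfold L in *; lra).
        unfold L in *; lra.
Qed.

(* If d(a, b) is large, a and b cannot both be close to geodesics from c:
   z between a, c and w between b, c force d a b <= d b z + d a w. *)
Lemma centers_far_apart (a b c z w : X) :
  between a z c -> between b w c -> d a b <= d b z + d a w.
Proof.
  unfold between. intros Hz Hw.
  pose proof (met_tri X d M b z c). pose proof (met_tri X d M a z b).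
  pose proof (met_tri X d M a w c). pose proof (met_tri X d M b w a).
  pose proof (met_sym X d M z b). pose proof (met_sym X d M b a).
  pose proof (met_sym X d M w a).
  lra.
Qed.

End MetricSpace.

Section Hyperbolic.
Variables (X : Type) (d : X -> X -> R) (delta : R).
Hypothesis M : IsMetric X d.
Hypothesis Hgs : geodesic_space X d.
Hypothesis Hthin : triangles_thin X d delta.
Hypothesis Hdelta : 0 < delta.

Local Notation between := (between X d).

Lemma projections_close_or_center_near (p e1 e2 u v : X) (r : R) :
  proj X d p r e1 u -> proj X d p r e2 v -> r + delta <= d p e1 ->
  Rbar_le (dS X d p r u v) (Finite (4 * delta)) \/
  exists q, between e1 q e2 /\ d p q <= r + 2 * delta.
Proof.
  intros Hu Hv Hpe.
  destruct (proj_param X d M p e1 u r Hu) as [g1 [G1 [Hr1 <-]]].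
  destruct (proj_param X d M p e2 v r Hv) as [g2 [G2 [Hr2 <-]]].
  destruct (Hgs e1 e2) as [sg Sg].
  set (x := g1 (r + delta)).
  assert (Hpx : d p x = r + delta) by (apply (geodesic_dist_start X d g1 p e1); auto; lra).
  destruct (Hthin p e1 e2 g1 sg g2 G1 Sg G2 x) as [q [[Hq | Hq] Hxq]].
  { exists (r + delta). split; auto; lra. }
  - right. destruct Hq as [t [Ht <-]]. exists (sg t). split.
    + apply (geodesic_between X d sg); auto.
    + pose proof (met_tri X d M p x (sg t)). lra.
  - left. destruct Hq as [s [Hs <-]].
    assert (Hps : d p (g2 s) = s) by (apply (geodesic_dist_start X d g2 p e2); auto).
    pose proof (met_tri X d M p x (g2 s)). pose proof (met_tri X d M p (g2 s) x).
    pose proof (met_sym X d M (g2 s) x).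
    eapply Rbar_le_trans.
    + apply (sphere_detour X d M p e1 e2 g1 g2 r (r + delta) s Hgs G1 G2); fold x; lra.
    + simpl. fold x. lra.
Qed.

Lemma dproj_small_or_center_near (p x y : X) (r theta : R) :
  4 * delta <= theta -> r + 2 * delta < d p x -> r + 2 * delta < d p y ->
  Rbar_le (dproj X d p r x y) (Finite theta) \/
  exists q, between x q y /\ d p q <= r + 2 * delta.
Proof.
  intros Htheta Hx Hy.
  destruct (classic (exists q, between x q y /\ d p q <= r + 2 * delta)) as [Hnear | Hfar];
    [right; exact Hnear | left].
  assert (Hpair : forall e1 e2 u v, (e1 = x \/ e1 = y) -> (e2 = x \/ e2 = y) ->
            proj X d p r e1 u -> proj X d p r e2 v ->
            Rbar_le (dS X d p r u v) (Finite theta)).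
  { intros e1 e2 u v He1 He2 Pu Pv.
    assert (r + delta <= d p e1) by (destruct He1; subst; lra).
    destruct (projections_close_or_center_near p e1 e2 u v r Pu Pv H)
      as [Hsmall | [q [Hq Hpq]]].
    - eapply Rbar_le_trans; [exact Hsmall | simpl; lra].
    - exfalso.
      destruct He1 as [-> | ->]; destruct He2 as [-> | ->].
      + apply (between_same X d M) in Hq. subst q. lra.
      + exact (Hfar (ex_intro _ q (conj Hq Hpq))).
      + apply (between_sym X d M) in Hq. exact (Hfar (ex_intro _ q (conj Hq Hpq))).
      + apply (between_same X d M) in Hq. subst q. lra. }
  apply Rbar_lub_le. intros l [u [v [Hu [Hv ->]]]].
  destruct Hu as [Hu | Hu]; destruct Hv as [Hv | Hv];
    [apply (Hpair x x) | apply (Hpair x y) | apply (Hpair y x) | apply (Hpair y y)]; auto.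
Qed.

End Hyperbolic.

Theorem lemma3p5
  (X : Type) (d : X -> X -> R) (delta : R)
  (G : Type) (mul : G -> G -> G) (one : G) (inv : G -> G) (act : G -> X -> X)
  (C : X -> Prop) (Gc : X -> G -> Prop) (rho r theta : R)
  (Hdelta : 0 < delta)
  (Hhyp : hyperbolic_geodesic_space X d delta)
  (Hgrp : IsGroup G mul one inv)
  (Hact : IsIsometricAction G mul one X d act)
  (Hfrf : FairlyRotatingFamily G mul one inv X d act C Gc rho)
  (Hrho : 20 * delta <= rho)
  (Hr1 : 2 + 2 * delta <= r) (Hr2 : r <= rho / 2 - 3 * delta)
  (Htheta : 4 * delta <= theta) :
  forall a b c, C a -> C b -> C c -> a <> b -> b <> c -> a <> c ->
    Rbar_lt (Finite theta) (dproj X d a r b c) ->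
    Rbar_le (dproj X d b r a c) (Finite theta).
Proof.
  intros a b c Ca Cb Cc Hab Hbc Hac Hlt.
  destruct Hhyp as [M [Hgs Hthin]].
  assert (Hsep : forall x y, C x -> C y -> x <> y -> rho <= d x y)
    by (intros; eapply (frf_sep G mul one inv X d act C Gc rho Hfrf); eauto).
  assert (Hfar : forall x y, C x -> C y -> x <> y -> r + 2 * delta < d x y)
    by (intros x y Cx Cy Hxy; pose proof (Hsep x y Cx Cy Hxy); lra).
  (* a is near a point z between b and c, since d_a(b, c) > theta *)
  destruct (dproj_small_or_center_near X d delta M Hgs Hthin Hdelta a b c r theta Htheta
              (Hfar a b Ca Cb Hab) (Hfar a c Ca Cc Hac)) as [Hsmall | [z [Hz Haz]]].
  { exfalso. destruct (dproj X d a r b c); simpl in *; lra. }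
  (* if d_b(a, c) > theta, b would be near a point w between a and c *)
  destruct (dproj_small_or_center_near X d delta M Hgs Hthin Hdelta b a c r theta Htheta
              (Hfar b a Cb Ca (not_eq_sym Hab)) (Hfar b c Cb Cc Hbc))
    as [Hsmall | [w [Hw Hbw]]]; [exact Hsmall | exfalso].
  (* then d(a, b) <= 2r + 4 delta < rho, contradicting separation *)
  pose proof (centers_far_apart X d M a b c w z Hw Hz).
  pose proof (Hsep a b Ca Cb Hab).
  rewrite (met_sym X d M b w) in *. lra.
Qed.
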